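(* Let $\mathbb{F}$ be a field of odd characteristic, let $n\ge 5$, and let $A\in\mathbb{M}_n(\mathbb{F})$ be a non-derogatory matrix with trace $c=\operatorname{Trace}(A)$. Then: (1) If $c\neq 0$, there exists $M\in\mathbb{M}_n(\mathbb{F})$ with $M^2=0$ such that $A+M$ is diagonalizable over $\mathbb{F}$ and its set of eigenvalues is exactly $\{0,c,-c\}$. (2) If $c=0$ and $n$ is odd, there exists $M\in\mathbb{M}_n(\mathbb{F})$ with $M^2=0$ such that $A+M$ is diagonalizable over $\mathbb{F}$ and its set of eigenvalues is exactly $\{0,1,-1\}$. (3) If $c=0$, $n$ is even and $\mathbb{F}\neq\mathbb{F}_3$, there exists $M\in\mathbb{M}_n(\mathbb{F})$ with $M^2=0$ such that $A+M$ is diagonalizable over $\mathbb{F}$ with at most $4$ distinct eigenvalues. In particular, if $\mathbb{F}$ is a finite field of odd cardinality $q\ge 5$, every non-derogatory matrix in $\mathbb{M}_n(\mathbb{F})$ with $n\ge 5$ can be written as $D+M$ with $D$ diagonalizable over $\mathbb{F}$ and $M^2=0$.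
   Context: A square matrix is non-derogatory if its minimal polynomial equals its characteristic polynomial (equivalently, it is similar to the companion matrix of its characteristic polynomial). A matrix $X\in\mathbb{M}_n(\mathbb{F})$ is diagonalizable if there is an invertible $U\in\mathbb{M}_n(\mathbb{F})$ with $U^{-1}XU$ diagonal. A matrix $M$ is square-zero if $M^2=0$. *)

From HB Require Import structures.
From mathcomp Require Import all_boot all_order all_algebra.
Set Implicit Arguments. Unset Strict Implicit. Unset Printing Implicit Defensive.
Import GRing.Theory.
Local Open Scope ring_scope.

(* MathComp's [mxminpoly] is only defined for
   matrices of size n'.+1; the 0x0 case is vacuous (and irrelevant here,
   since n >= 5). *)
Definition nonderogatory (F : fieldType) (n : nat) : 'M[F]_n -> Prop :=
  match n return 'M[F]_n -> Prop with
  | 0 => fun _ => True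
  | n'.+1 => fun A => mxminpoly A = char_poly A
  end.

Definition odd_char (F : fieldType) : Prop :=
  exists p : nat, p \in [pchar F] /\ odd p.

(* A nonderogatory matrix has a cyclic vector: merging local minimal
   polynomials along coprime factorisations yields a vector whose local
   minimal polynomial annihilates A, hence is its characteristic polynomial.
   In the associated Krylov basis A becomes a companion matrix B, with
   e_i B = e_(i+1) for i < n, e_n B = beta, and tr A = beta_n.  Grouping basis vectors into pairs
   (e_(i-1), e_i) on which D acts by e_(i-1) |-> e_i |-> k e_(i-1) gives
   D^2 = k on each pair, while N = B - D sends every basis vector to a
   combination of lower members of pairs, which N kills: N^2 = 0.  Choosing
   the parity of the pairing, k and the last row of D according to tr A and
   the parity of the size makes D a root of X (X^2 - c^2), X (X^2 - 1) or
   (X^2 - 1) (X^2 - x^2), split with simple roots in odd characteristic; then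
   A + M is similar to D for a square-zero M. *)

From HB Require Import structures.
From mathcomp Require Import all_boot all_order all_algebra all_field zify ring.
From Stdlib Require Import Classical.
Set Implicit Arguments. Unset Strict Implicit. Unset Printing Implicit Defensive.
Import GRing.Theory.
Local Open Scope ring_scope.

Section CoprimeLcm.
Variable F : fieldType.
Implicit Types f g : {poly F}.

Lemma dvdp_mull_size1 (h b : {poly F}) : b != 0 -> h * b %| b -> size h == 1%N.
Proof. by move=> b0; rewrite -{2}[b]mul1r dvdp_mul2r // dvdp1. Qed.

(* b is the largest divisor of g coprime to f / gcdp f g, and a the largest
   divisor of f coprime to b. *)
Lemma coprime_lcm_split f g : f != 0 -> g != 0 ->
  exists a b, [/\ a %| f, b %| g, coprimep a b, f %| a * b & g %| a * b].
Proof.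
move=> f0 g0.
set d := gcdp f g.
have [df dg] : d %| f /\ d %| g by rewrite dvdp_gcdl dvdp_gcdr.
set f1 := f %/ d; set g1 := g %/ d.
have cop1 : coprimep f1 g1 by apply: coprimep_div_gcd; rewrite f0.
have ef : f = f1 * d by rewrite divpK.
have eg : g = g1 * d by rewrite divpK.
set b := gdcop f1 g; set a := gdcop b f.
have [bg cbf1 bmax] : [/\ b %| g, coprimep b f1 &
    forall e, e %| g -> coprimep e f1 -> e %| b].
  by rewrite /b; case: gdcopP => r rg; rewrite (negPf g0) orbF.
have [af cab amax] : [/\ a %| f, coprimep a b &
    forall e, e %| f -> coprimep e b -> e %| a].
  by rewrite /a; case: gdcopP => r rf; rewrite (negPf f0) orbF.
have b0 : b != 0 by apply: contraNneq g0 => b0; move: bg; rewrite b0 dvd0p.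
have a0 : a != 0 by apply: contraNneq f0 => a0; move: af; rewrite a0 dvd0p.
have g1b : g1 %| b by apply: bmax; rewrite ?eg ?dvdp_mulr // coprimep_sym.
exists a, b; split => //.
- have [r er] := dvdpP _ _ af.
  have crf1 : coprimep r f1.
    rewrite coprimep_def; apply: (@dvdp_mull_size1 _ a a0); apply: amax.
      by rewrite er dvdp_mul2r // dvdp_gcdl.
    rewrite coprimepMl cab andbT.
    by apply: (coprimep_dvdr (dvdp_gcdr r f1)); rewrite coprimep_sym.
  have rd : r %| d.
    have : r %| f by rewrite er dvdp_mulr.
    by rewrite ef Gauss_dvdpr.
  have rb : r %| b by apply: bmax => //; apply: dvdp_trans rd dg.
  by rewrite er mulrC dvdp_mul2l.
- have [s es] := dvdpP _ _ bg.
  have [t et] := dvdpP _ _ g1b.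
  have g10 : g1 != 0 by apply: contraNneq g0 => e; rewrite eg e mul0r.
  have sd : s %| d.
    have : d * g1 = (s * t) * g1 by rewrite mulrC -eg es et mulrA.
    by move/(mulIf g10) ->; apply: dvdp_mulr.
  have csb : coprimep s b.
    rewrite coprimep_def; apply: (@dvdp_mull_size1 _ b b0); apply: bmax.
      by rewrite es dvdp_mul2r // dvdp_gcdl.
    by rewrite coprimepMl cbf1 andbT (coprimep_dvdr (dvdp_gcdr s b)).
  have sa : s %| a by apply: amax => //; apply: dvdp_trans sd df.
  by rewrite es dvdp_mul2r.
Qed.

End CoprimeLcm.

Section LocalMinPoly.
Variables (F : fieldType) (n : nat) (A : 'M[F]_n.+1).
Implicit Types (u v w : 'rV[F]_n.+1) (p q : {poly F}).

Definition annihilates v p := v *m horner_mx A p == 0.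

Definition local_minpoly v p := annihilates v p /\ forall q, annihilates v q -> p %| q.

Lemma annihilatesMl v p q : annihilates v p -> annihilates v (q * p).
Proof. by move/eqP; rewrite /annihilates mulrC rmorphM mulmxA => ->; rewrite mul0mx. Qed.

Lemma annihilatesMr v p q : annihilates v p -> annihilates v (p * q).
Proof. by rewrite mulrC; apply: annihilatesMl. Qed.

Lemma annihilatesB v p q :
  annihilates v p -> annihilates v q -> annihilates v (p - q).
Proof. by rewrite /annihilates rmorphB mulmxBr => /eqP-> /eqP->; rewrite subrr. Qed.

Lemma annihilates_add u w p :
  annihilates u p -> annihilates w p -> annihilates (u + w) p.
Proof. by rewrite /annihilates mulmxDl => /eqP-> /eqP->; rewrite addr0. Qed.

Lemma annihilates_addKl u w p :
  annihilates (u + w) p -> annihilates w p -> annihilates u p.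
Proof. by rewrite /annihilates mulmxDl => /eqP uw /eqP w0; rewrite -uw w0 addr0. Qed.

Lemma annihilates_shift v g p :
  annihilates (v *m horner_mx A g) p = annihilates v (g * p).
Proof. by rewrite /annihilates rmorphM mulmxA. Qed.

Lemma annihilates_minpoly v : annihilates v (mxminpoly A).
Proof. by rewrite /annihilates mx_root_minpoly mulmx0. Qed.

Lemma local_minpoly_neq0 v p : local_minpoly v p -> p != 0.
Proof.
move=> [_ pmin]; apply: contraTneq (pmin _ (annihilates_minpoly v)) => ->.
by rewrite dvd0p monic_neq0 // mxminpoly_monic.
Qed.

Lemma exists_local_minpoly v : exists p, local_minpoly v p.
Proof.
suff: forall k p, (size p <= k)%N -> annihilates v p -> p != 0 ->
    exists q, local_minpoly v q.
  move/(_ _ (mxminpoly A) (leqnn _) (annihilates_minpoly v)); apply.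
  by rewrite monic_neq0 ?mxminpoly_monic.
elim=> [|k IHk] p; first by rewrite size_poly_leq0 => /eqP->; rewrite eqxx.
move=> sp vp p0; have [pmin|] := classic (forall q, annihilates v q -> p %| q).
  by exists p.
move=> /not_all_ex_not[q /(imply_to_and (annihilates v q))[vq pq]].
apply: (IHk (q %% p)); last by rewrite -/(p %| q); apply/negP.
  by rewrite -ltnS (leq_trans _ sp) // ltn_modp.
have -> : q %% p = q - q %/ p * p by rewrite {2}(divp_eq q p) addrAC subrr add0r.
by rewrite annihilatesB ?annihilatesMl.
Qed.

Lemma local_minpoly_shift v g h :
  local_minpoly v (g * h) -> local_minpoly (v *m horner_mx A g) h.
Proof.
move=> gh_min; have gh0 := local_minpoly_neq0 gh_min.
have g0 : g != 0 by apply: contraNneq gh0 => ->; rewrite mul0r.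
case: gh_min => vgh ghmin; rewrite /local_minpoly annihilates_shift.
by split=> // q; rewrite annihilates_shift => /ghmin; rewrite dvdp_mul2l.
Qed.

Lemma local_minpolyD u w a b : coprimep a b ->
  local_minpoly u a -> local_minpoly w b -> local_minpoly (u + w) (a * b).
Proof.
move=> cab [ua amin] [wb bmin].
split=> [|q uwq]; first exact: annihilates_add (annihilatesMr b ua) (annihilatesMl a wb).
rewrite (Gauss_dvdp _ cab); apply/andP; split.
  rewrite -(Gauss_dvdpl q cab); apply: amin.
  exact: annihilates_addKl (annihilatesMr b uwq) (annihilatesMl q wb).
have cba : coprimep b a by rewrite coprimep_sym.
rewrite -(Gauss_dvdpl q cba); apply: bmin.
rewrite addrC in uwq.
exact: annihilates_addKl (annihilatesMr a uwq) (annihilatesMl q ua).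
Qed.

Lemma local_minpoly_lcm v w p q : local_minpoly v p -> local_minpoly w q ->
  exists u r, [/\ local_minpoly u r, p %| r & q %| r].
Proof.
move=> vp wq; have p0 := local_minpoly_neq0 vp; have q0 := local_minpoly_neq0 wq.
have [a [b [ap bq cab pab qab]]] := coprime_lcm_split p0 q0.
have [g def_p] := dvdpP _ _ ap; have [h def_q] := dvdpP _ _ bq.
rewrite def_p in vp; rewrite def_q in wq.
exists (v *m horner_mx A g + w *m horner_mx A h), (a * b).
by split=> //; apply: local_minpolyD => //; apply: local_minpoly_shift.
Qed.

Lemma exists_vector_minpoly : exists v p, local_minpoly v p /\ horner_mx A p = 0.
Proof.
suff [v [p [vp ann]]] : exists v p, local_minpoly v p /\
    forall i, i \in enum 'I_n.+1 -> annihilates (delta_mx 0 i) p.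
  exists v, p; split=> //; apply/row_matrixP => i.
  by rewrite row0 rowE; apply/eqP/ann; rewrite mem_enum.
elim: (enum _) => [|i s [v [p [vp ann]]]].
  by have [p vp] := exists_local_minpoly 0; exists 0, p.
have [q iq] := exists_local_minpoly (delta_mx 0 i).
have [u [r [ur pr qr]]] := local_minpoly_lcm vp iq.
exists u, r; split=> // j; rewrite inE => /orP[/eqP->|js].
  by have [t ->] := dvdpP _ _ qr; apply: annihilatesMl; case: iq.
by have [t ->] := dvdpP _ _ pr; apply: annihilatesMl; apply: ann.
Qed.

Definition krylov v : 'M[F]_n.+1 := \matrix_(i < n.+1) (v *m A ^+ i).

Lemma mul_krylov v x : x *m krylov v = v *m horner_mx A (rVpoly x).
Proof.
rewrite {2}[x]row_sum_delta !linear_sum mulmx_sum_row /=.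
apply: eq_bigr => i _; rewrite rowK !linearZ /= rVpoly_delta.
by rewrite rmorphXn /= horner_mx_X.
Qed.

Lemma nonderogatory_cyclic_vector :
  mxminpoly A = char_poly A -> exists v, krylov v \in unitmx.
Proof.
move=> min_char; have [v [p [[vp pmin] Ap]]] := exists_vector_minpoly.
have p0 : p != 0 by apply: (@local_minpoly_neq0 v); split.
have size_p : (n.+2 <= size p)%N.
  by rewrite -(size_char_poly A) -min_char dvdp_leq ?mxminpoly_min.
exists v; rewrite -row_free_unit; apply/inj_row_free => x.
rewrite mul_krylov => /eqP /pmin.
have [x0 _|x0 /(dvdp_leq x0) size_x] := eqVneq (rVpoly x) 0.
  by apply/rowP => i; rewrite -[x]rVpolyK x0 !mxE coef0.
by have := leq_trans size_p (leq_trans size_x (size_poly _ _)); rewrite ltnn.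
Qed.

End LocalMinPoly.

Section OrdinalShift.
Variable n : nat.
Implicit Types i j : 'I_n.+1.

(* ord_succ ord_max wraps around to ord0, the default value of inord. *)
Definition ord_succ i : 'I_n.+1 := inord i.+1.
Definition ord_prev i : 'I_n.+1 := inord i.-1.

Lemma ord_neq_max i : (i != ord_max) = (i < n)%N.
Proof. by rewrite -val_eqE /= ltn_neqAle -ltnS ltn_ord andbT. Qed.

Lemma ord_succ_val i : i != ord_max -> ord_succ i = i.+1 :> nat.
Proof. by rewrite ord_neq_max => i_lt; rewrite inordK. Qed.

Lemma ord_prev_val i : ord_prev i = i.-1 :> nat.
Proof. by rewrite inordK // (leq_ltn_trans (leq_pred _)). Qed.

End OrdinalShift.

Arguments ord_succ : simpl never.
Arguments ord_prev : simpl never.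

Ltac ord_bounds :=
  repeat match goal with i : 'I_ _ |- _ =>
    lazymatch goal with
    | _ : is_true (nat_of_ord i < _)%N |- _ => fail
    | _ => have := ltn_ord i; intro
    end
  end.

(* Turns (in)equalities between ordinals built with ord_succ, ord_prev and
   ord_max into arithmetic on their values, and calls lia. *)
Ltac ord_lia :=
  ord_bounds;
  repeat match goal with H : is_true (_ != ord_max) |- _ => rewrite ord_neq_max in H end;
  repeat match goal with H : is_true (?a != _) |- _ =>
    let T := type of a in let T := eval hnf in T in
    lazymatch T with ordinal _ => move: H; rewrite -val_eqE /= ?ord_prev_val /= => H end
  end;
  rewrite ?ord_neq_max;
  lazymatch goal with
  | |- _ = _ => apply/val_inj
  | |- is_true (_ != _) => apply/negP => /eqP/(congr1 val)
  | _ => idtac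
  end;
  rewrite /= ?ord_prev_val /=;
  repeat (rewrite ord_succ_val; rewrite ?ord_neq_max ?ord_prev_val /=);
  lia.

Section OppositeScalars.
Variable F : fieldType.
Hypothesis two_neq0 : (2%:R : F) != 0.

Lemma neq_oppr (a : F) : a != 0 -> a != - a.
Proof. by move=> a0; rewrite -addr_eq0 -mulr2n -mulr_natl mulf_eq0 negb_or two_neq0. Qed.

Lemma uniq_0_opp (a : F) : a != 0 -> uniq [:: 0; a; -a].
Proof.
move=> a0; rewrite /= !inE negb_or eq_sym a0 eq_sym oppr_eq0 a0.
by rewrite neq_oppr.
Qed.

Lemma uniq_1_opp (a : F) : [/\ a != 0, a != 1 & a != -1] -> uniq [:: 1; -1; a; -a].
Proof.
case=> a0 a1 aN1; rewrite /= !inE !negb_or (neq_oppr (oner_neq0 F)) (neq_oppr a0).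
by rewrite !(eq_sym _ a) a1 aN1 (eq_sym _ (- a)) eqr_oppLR aN1 eqr_opp (eq_sym 1) a1.
Qed.

End OppositeScalars.

Section Companion.
Variables (F : fieldType) (n : nat).
Implicit Types (A B D N P : 'M[F]_n.+1) (beta v : 'rV[F]_n.+1) (i : 'I_n.+1).
Local Notation "''e_' i" := (delta_mx 0 i : 'rV[F]_n.+1) : ring_scope.

Definition companion beta : 'M[F]_n.+1 :=
  \matrix_i (if i == ord_max then beta else 'e_(ord_succ i)).

Lemma row_companion_max beta : 'e_ord_max *m companion beta = beta.
Proof. by rewrite -rowE rowK eqxx. Qed.

Lemma row_companion beta i :
  i != ord_max -> 'e_i *m companion beta = 'e_(ord_succ i).
Proof. by move=> i_max; rewrite -rowE rowK (negPf i_max). Qed.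

Lemma mxtrace_companion beta : \tr (companion beta) = beta 0 ord_max.
Proof.
rewrite /mxtrace (bigD1 ord_max) //= big1 ?addr0 => [|i i_max]; rewrite mxE ?eqxx //.
by rewrite (negPf i_max) mxE eqxx (_ : i == ord_succ i = false) //; apply/negbTE; ord_lia.
Qed.

Lemma nonderogatory_companion A : mxminpoly A = char_poly A ->
  exists P beta, [/\ P \in unitmx, P *m A = companion beta *m P & beta 0 ord_max = \tr A].
Proof.
move=> /nonderogatory_cyclic_vector[v Ku].
set K := krylov A v; set beta := v *m A ^+ n.+1 *m invmx K.
have KA : K *m A = companion beta *m K.
  apply/row_matrixP => i; rewrite !row_mul rowK -mulmxA -[A ^+ i *m A]exprSr rowE.
  have [->|i_max] := eqVneq i ord_max; first by rewrite row_companion_max mulmxKV.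
  by rewrite row_companion // -rowE rowK ord_succ_val.
exists K, beta; split=> //.
have -> : A = invmx K *m (companion beta *m K) by rewrite -KA mulKmx.
by rewrite mxtrace_mulC mulmxK ?mxtrace_companion.
Qed.

Lemma mulmx_sqr_sub_scalar v D a : v *m (D *m D - a%:M) = v *m D *m D - a *: v.
Proof. by rewrite mulmxBr mul_mx_scalar mulmxA. Qed.

Lemma horner_mx_sqr_subC D a : horner_mx D ('X^2 - a%:P) = D *m D - a%:M.
Proof. by rewrite rmorphB /= rmorphXn /= horner_mx_X horner_mx_C expr2. Qed.

Lemma horner_mx_comm D f g :
  horner_mx D f *m horner_mx D g = horner_mx D g *m horner_mx D f.
Proof. by rewrite !mulmxE -!rmorphM mulrC. Qed.

Lemma horner_mx_X_sqr_sub D a :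
  horner_mx D (\prod_(b <- [:: 0; a; -a]) ('X - b%:P)) = D *m (D *m D - (a ^+ 2)%:M).
Proof.
have -> : \prod_(b <- [:: 0; a; -a]) ('X - b%:P) = 'X * ('X^2 - (a ^+ 2)%:P).
  by rewrite !big_cons big_nil mulr1 polyCN polyC0 (rmorphXn polyC); ring.
by rewrite rmorphM /= horner_mx_X horner_mx_sqr_subC.
Qed.

Lemma horner_mx_sqr_sub_sqr_sub D a :
  horner_mx D (\prod_(b <- [:: 1; -1; a; -a]) ('X - b%:P)) =
  (D *m D - 1%:M) *m (D *m D - (a ^+ 2)%:M).
Proof.
have -> : \prod_(b <- [:: 1; -1; a; -a]) ('X - b%:P) =
    ('X^2 - 1%:P) * ('X^2 - (a ^+ 2)%:P).
  by rewrite !big_cons big_nil mulr1 !polyCN (rmorphXn polyC); ring.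
by rewrite rmorphM /= !horner_mx_sqr_subC.
Qed.

Definition sqzero_diagonalizable A (s : seq F) := exists M : 'M[F]_n.+1,
  [/\ M *m M = 0, diagonalizable (A + M) & forall a, eigenvalue (A + M) a = (a \in s)].

Lemma sqzero_diagonalizable_similar A B P s :
  P \in unitmx -> P *m A = B *m P ->
  sqzero_diagonalizable B s -> sqzero_diagonalizable A s.
Proof.
move=> Pu PA [M [MM diagBM eigBM]].
pose conjP f := invmx P *m f *m P.
have conjPM f g : conjP (f *m g) = conjP f *m conjP g.
  by rewrite /conjP !mulmxA mulmxK.
have minpolyAM : mxminpoly (A + conjP M) = mxminpoly (B + M).
  have -> : A = conjP B by rewrite /conjP -mulmxA -PA mulKmx.
  by rewrite /conjP -mulmxDl -mulmxDr -conjVmx // mxminpoly_uconj ?unitmx_inv.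
exists (conjP M); split.
- by rewrite -conjPM MM /conjP mulmx0 mul0mx.
- by apply/diagonalizableP; rewrite minpolyAM; apply/diagonalizableP.
- by move=> a; rewrite eigenvalue_root_min minpolyAM -eigenvalue_root_min.
Qed.

Lemma sqzero_diagonalizable_split B D N (rs : seq F) :
  B = D + N -> N *m N = 0 -> uniq rs ->
  horner_mx D (\prod_(a <- rs) ('X - a%:P)) = 0 ->
  sqzero_diagonalizable B [seq a <- rs | eigenvalue D a].
Proof.
move=> -> NN urs Drs; exists (- N); rewrite addrK; split.
- by rewrite mulNmx mulmxN opprK NN.
- by apply/diagonalizableP; exists rs => //; apply: mxminpoly_min.
move=> a; rewrite mem_filter; apply/idP/andP => [Da|[] //]; split=> //.
move: Da; rewrite eigenvalue_root_min -root_prod_XsubC.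
exact: root_dvdp (mxminpoly_min Drs).
Qed.

End Companion.

Section PairMatrix.
Variables (F : fieldType) (n p : nat) (k : F) (r beta : 'rV[F]_n.+1).
Implicit Types i j : 'I_n.+1.
Local Notation "''e_' i" := (delta_mx 0 i : 'rV[F]_n.+1) : ring_scope.

Definition upper i := (0 < i)%N && odd (i + p).

(* Every upper index i is paired with i - 1; off the last row D agrees with
   companion beta on the lower indices. *)
Definition pairmx : 'M[F]_n.+1 := \matrix_i
  (if i == ord_max then r else if upper i then k *: 'e_(ord_prev i) else 'e_(ord_succ i)).

Local Notation D := pairmx.
Local Notation N := (companion beta - pairmx).
Local Notation c := (beta 0 ord_max).

Lemma upper_prev i : upper i -> [/\ ~~ upper (ord_prev i), ord_prev i != ord_max
  & ord_succ (ord_prev i) = i].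
Proof. by rewrite /upper => /andP[i0 odd_i]; split; ord_lia. Qed.

Lemma upper_succ i : i != ord_max -> upper i -> ~~ upper (ord_succ i).
Proof. by rewrite /upper => i_max /andP[i0 odd_i]; ord_lia. Qed.

Lemma prev_succ i : i != ord_max -> ord_prev (ord_succ i) = i.
Proof. by move=> i_max; ord_lia. Qed.

Lemma row_pairmx_max : 'e_ord_max *m D = r.
Proof. by rewrite -rowE rowK eqxx. Qed.

Lemma row_pairmx_upper i : i != ord_max -> upper i -> 'e_i *m D = k *: 'e_(ord_prev i).
Proof. by move=> i_max ui; rewrite -rowE rowK (negPf i_max) ui. Qed.

Lemma row_pairmx_lower i : i != ord_max -> ~~ upper i -> 'e_i *m D = 'e_(ord_succ i).
Proof. by move=> i_max li; rewrite -rowE rowK (negPf i_max) (negPf li). Qed.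

Lemma pairmx_sqr_upper i : i != ord_max -> upper i -> 'e_i *m D *m D = k *: 'e_i.
Proof.
move=> i_max ui; have [lpi pi_max spi] := upper_prev ui.
by rewrite row_pairmx_upper // -scalemxAl row_pairmx_lower // spi.
Qed.

Lemma pairmx_sqr_lower i : i != ord_max -> ~~ upper i -> upper (ord_succ i) ->
  ord_succ i != ord_max -> 'e_i *m D *m D = k *: 'e_i.
Proof.
by move=> i_max li usi si_max; rewrite row_pairmx_lower // row_pairmx_upper // prev_succ.
Qed.

Lemma row_defect_max : 'e_ord_max *m N = beta - r.
Proof. by rewrite mulmxBr row_companion_max row_pairmx_max. Qed.

Lemma row_defect_lower i : i != ord_max -> ~~ upper i -> 'e_i *m N = 0.
Proof. by move=> i_max li; rewrite mulmxBr row_companion // row_pairmx_lower ?subrr. Qed.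

Lemma row_defect_upper i : i != ord_max -> upper i ->
  'e_i *m N = 'e_(ord_succ i) - k *: 'e_(ord_prev i).
Proof. by move=> i_max ui; rewrite mulmxBr row_companion // row_pairmx_upper. Qed.

(* N vanishes on the lower indices and maps the upper ones to lower ones. *)
Lemma defect_sqr : upper ord_max \/ r = beta -> (beta - r) *m N = 0 -> N *m N = 0.
Proof.
move=> max_r beta_r; apply/row_matrixP => i; rewrite row0 rowE mulmxA.
have [->|i_max] := eqVneq i ord_max; first by rewrite row_defect_max.
have [ui|li] := boolP (upper i); last by rewrite row_defect_lower ?mul0mx.
have [lpi pi_max _] := upper_prev ui; have lsi := upper_succ i_max ui.
rewrite row_defect_upper // mulmxBl -scalemxAl (row_defect_lower pi_max lpi) scaler0 subr0.
have [si_max|si_max] := eqVneq (ord_succ i) ord_max; last exact: row_defect_lower.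
rewrite si_max row_defect_max; case: max_r => [umax|->]; last by rewrite subrr.
by move: lsi; rewrite si_max umax.
Qed.

(* Each summand is a (- c)-eigenvector of D when k = c ^+ 2. *)
Definition pair_tail : 'rV[F]_n.+1 :=
  \sum_(j | upper j && (j != ord_max)) beta 0 j *: ('e_j - c *: 'e_(ord_prev j)).

Lemma pair_vec_pairmx j : j != ord_max -> upper j ->
  ('e_j - c *: 'e_(ord_prev j)) *m D = k *: 'e_(ord_prev j) - c *: 'e_j.
Proof.
move=> j_max uj; have [lpj pj_max spj] := upper_prev uj.
by rewrite mulmxBl -scalemxAl row_pairmx_upper // row_pairmx_lower // spj.
Qed.

Lemma pair_tail_sqr : pair_tail *m D *m D = k *: pair_tail.
Proof.
rewrite /pair_tail !mulmx_suml scaler_sumr; apply: eq_bigr => j /andP[uj j_max].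
have [lpj pj_max spj] := upper_prev uj.
rewrite -!scalemxAl mulmxBl mulmxBl -!scalemxAl pairmx_sqr_upper //.
rewrite pairmx_sqr_lower ?spj // [c *: (k *: _)]scalerA mulrC -scalerA -scalerBr.
by rewrite !scalerA mulrC.
Qed.

Lemma pair_tail_entry_max : pair_tail 0 ord_max = 0.
Proof.
rewrite /pair_tail summxE big1 // => j /andP[uj j_max].
have [_ pj_max _] := upper_prev uj.
by rewrite !mxE !eqxx /= eq_sym (negPf j_max) eq_sym (negPf pj_max) mulr0 subrr mulr0.
Qed.

Lemma defect_beta_tail : (beta - pair_tail) *m N = c *: (beta - r).
Proof.
have beta_N : beta *m N =
    c *: (beta - r) + \sum_(j | upper j && (j != ord_max)) beta 0 j *: ('e_j *m N).
  rewrite {1}[beta]row_sum_delta mulmx_suml (bigD1 ord_max) //= -scalemxAl.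
  rewrite row_defect_max (bigID upper) /= [X in _ + (_ + X)]big1 ?addr0; last first.
    by move=> j /andP[j_max lj]; rewrite -scalemxAl row_defect_lower ?scaler0.
  by congr (_ + _); apply: eq_big => [j|j _]; [exact: andbC | rewrite scalemxAl].
have tail_N : pair_tail *m N =
    \sum_(j | upper j && (j != ord_max)) beta 0 j *: ('e_j *m N).
  rewrite mulmx_suml; apply: eq_bigr => j /andP[uj j_max].
  have [lpj pj_max _] := upper_prev uj.
  by rewrite -scalemxAl mulmxBl -scalemxAl (row_defect_lower pj_max) // scaler0 subr0.
by rewrite mulmxBl beta_N tail_N addrK.
Qed.

End PairMatrix.

(* Size n.+1 odd, zero trace: pairs {2j, 2j+1} with k = 1 and last row beta. *)
Section OddSizeTraceless.
Variables (F : fieldType) (n : nat) (beta : 'rV[F]_n.+1).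
Hypotheses (n_even : ~~ odd n) (n_ge2 : (2 <= n)%N) (beta_max : beta 0 ord_max = 0).
Local Notation "''e_' i" := (delta_mx 0 i : 'rV[F]_n.+1) : ring_scope.
Local Notation D := (pairmx 0 1 beta).

Lemma odd_pairmx_sqr i : i != ord_max -> 'e_i *m D *m D = 'e_i.
Proof.
move=> i_max; have [ui|li] := boolP (upper 0 i); first by rewrite pairmx_sqr_upper ?scale1r.
by rewrite pairmx_sqr_lower ?scale1r //; move: li; rewrite /upper; ord_lia.
Qed.

Lemma odd_beta_pairmx_sqr : beta *m D *m D = beta.
Proof.
have -> : beta *m D *m D = \sum_j beta 0 j *: ('e_j *m D *m D).
  by rewrite {1}[beta]row_sum_delta !mulmx_suml; apply: eq_bigr => j _; rewrite !scalemxAl.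
rewrite [RHS]row_sum_delta; apply: eq_bigr => j _.
by have [->|/odd_pairmx_sqr->] := eqVneq j ord_max; rewrite ?beta_max ?scale0r.
Qed.

Lemma odd_pairmx_cube : D *m D *m D = D.
Proof.
apply/row_matrixP => i; rewrite !rowE !mulmxA.
have [->|/odd_pairmx_sqr->] := eqVneq i ord_max; last by [].
by rewrite row_pairmx_max odd_beta_pairmx_sqr.
Qed.

Lemma odd_beta_pairmx_entry_max : (beta *m D) 0 ord_max = 0.
Proof.
rewrite {1}[beta]row_sum_delta mulmx_suml summxE big1 // => j _.
have [->|j_max] := eqVneq j ord_max; first by rewrite beta_max scale0r mul0mx mxE.
rewrite -scalemxAl mxE; apply/eqP; rewrite mulf_eq0; apply/orP; right; apply/eqP.
have [uj|lj] := boolP (upper 0 j).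
  have [_ pj_max _] := upper_prev uj.
  by rewrite row_pairmx_upper // !mxE eq_sym (negPf pj_max) mulr0.
rewrite row_pairmx_lower // mxE eqxx /= -val_eqE /= ord_succ_val //.
by move: lj j_max; rewrite /upper ord_neq_max => lj j_lt; case: eqP => // ?; lia.
Qed.

Lemma odd_pairmx_eigenvalues : all (eigenvalue D) [:: 0; 1; -1].
Proof.
have succ0_max : ord_succ ord0 != ord_max :> 'I_n.+1 by ord_lia.
have ord0_max : ord0 != ord_max :> 'I_n.+1 by ord_lia.
have e0D : 'e_ord0 *m D = 'e_(ord_succ ord0) by rewrite row_pairmx_lower.
have e1D : 'e_(ord_succ ord0) *m D = 'e_ord0.
  by rewrite row_pairmx_upper ?scale1r ?prev_succ //; rewrite /upper; ord_lia.
have e0_e1 : (ord0 == ord_succ ord0 :> 'I_n.+1) = false by apply/negbTE; ord_lia.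
rewrite /= andbT; apply/and3P; split; apply/eigenvalueP.
- exists ('e_ord_max - beta *m D).
    by rewrite mulmxBl row_pairmx_max odd_beta_pairmx_sqr subrr scale0r.
  apply/negP => /eqP/rowP/(_ ord_max).
  rewrite mxE [X in _ + X]mxE odd_beta_pairmx_entry_max !mxE !eqxx subr0.
  by move/eqP; rewrite oner_eq0.
- exists ('e_ord0 + 'e_(ord_succ ord0)); first by rewrite mulmxDl e0D e1D addrC scale1r.
  by apply/negP => /eqP/rowP/(_ ord0); rewrite !mxE eqxx e0_e1 addr0; apply/eqP/oner_neq0.
- exists ('e_ord0 - 'e_(ord_succ ord0)); first by rewrite mulmxBl e0D e1D scaleN1r opprB.
  by apply/negP => /eqP/rowP/(_ ord0); rewrite !mxE eqxx e0_e1 subr0; apply/eqP/oner_neq0.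
Qed.

Lemma companion_sqzero_odd : (2%:R : F) != 0 ->
  sqzero_diagonalizable (companion beta) [:: 0; 1; -1].
Proof.
move=> two_neq0; rewrite -(all_filterP odd_pairmx_eigenvalues).
apply: (sqzero_diagonalizable_split (N := companion beta - D)).
- by rewrite subrKC.
- by apply: defect_sqr; [right | rewrite subrr mul0mx].
- by apply: uniq_0_opp; rewrite ?oner_eq0.
- by rewrite horner_mx_X_sqr_sub expr1n mulmxBr mulmx1 mulmxA odd_pairmx_cube subrr.
Qed.

End OddSizeTraceless.

(* Size n.+1 even, zero trace: pairs {2j, 2j+1} with k = 1, except that
   e_(n-1) |-> e_n |-> x^2 e_(n-1) + pair_tail. *)
Section EvenSizeTraceless.
Variables (F : fieldType) (n : nat) (beta : 'rV[F]_n.+1) (x : F).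
Hypothesis n_odd : odd n.
Local Notation "''e_' i" := (delta_mx 0 i : 'rV[F]_n.+1) : ring_scope.
Local Notation tail := (pair_tail 0 beta).
Local Notation pm := (ord_prev (@ord_max n)).
Local Notation D := (pairmx 0 1 (tail + x ^+ 2 *: 'e_pm)).

Lemma even_prev_max : [/\ ~~ upper 0 pm, pm != ord_max & ord_succ pm = ord_max].
Proof. by rewrite /upper; split; ord_lia. Qed.

Lemma even_pairmx_sqr i : i != ord_max -> i != pm -> 'e_i *m D *m D = 'e_i.
Proof.
move=> i_max i_pm; have [ui|li] := boolP (upper 0 i).
  by rewrite pairmx_sqr_upper ?scale1r.
rewrite pairmx_sqr_lower ?scale1r //; move: li; rewrite /upper; ord_lia.
Qed.

Lemma even_pairmx_poly : (D *m D - 1%:M) *m (D *m D - (x ^+ 2)%:M) = 0.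
Proof.
have [lpm pm_max spm] := even_prev_max.
have Q12 : (D *m D - 1%:M) *m (D *m D - (x ^+ 2)%:M) =
    (D *m D - (x ^+ 2)%:M) *m (D *m D - 1%:M).
  by rewrite -!horner_mx_sqr_subC horner_mx_comm.
have DQ1 : D *m (D *m D - 1%:M) = (D *m D - 1%:M) *m D.
  by rewrite mulmxBr mulmxBl scalar_mxC !mulmxA.
have tail_Q1 : tail *m (D *m D - 1%:M) = 0.
  by rewrite mulmx_sqr_sub_scalar pair_tail_sqr subrr.
apply/row_matrixP => i; rewrite row0 rowE.
have [->|i_max] := eqVneq i ord_max.
  rewrite Q12 mulmxA (mulmx_sqr_sub_scalar 'e_ord_max) row_pairmx_max.
  rewrite (mulmxDl tail) -scalemxAl row_pairmx_lower // spm addrK.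
  by rewrite -mulmxA DQ1 mulmxA tail_Q1 mul0mx.
have [->|i_pm] := eqVneq i pm.
  rewrite Q12 mulmxA (mulmx_sqr_sub_scalar 'e_pm) row_pairmx_lower // spm.
  by rewrite row_pairmx_max addrK tail_Q1.
by rewrite mulmxA (mulmx_sqr_sub_scalar 'e_i) even_pairmx_sqr // scale1r subrr mul0mx.
Qed.

Lemma even_defect_sqr : beta 0 ord_max = 0 ->
  (companion beta - D) *m (companion beta - D) = 0.
Proof.
move=> beta_max; have [lpm pm_max _] := even_prev_max.
apply: defect_sqr; first by left; rewrite /upper; ord_lia.
rewrite opprD addrA mulmxBl defect_beta_tail beta_max scale0r -scalemxAl.
by rewrite row_defect_lower // scaler0 subrr.
Qed.

Lemma companion_sqzero_even : (2%:R : F) != 0 -> beta 0 ord_max = 0 ->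
  [/\ x != 0, x != 1 & x != -1] ->
  exists2 s : seq F, (size s <= 4)%N & sqzero_diagonalizable (companion beta) s.
Proof.
move=> two_neq0 beta_max x_neq.
exists [seq a <- [:: 1; -1; x; -x] | eigenvalue D a]; last first.
  apply: (sqzero_diagonalizable_split (N := companion beta - D)).
  - by rewrite subrKC.
  - exact: even_defect_sqr.
  - exact: uniq_1_opp.
  - by rewrite horner_mx_sqr_sub_sqr_sub even_pairmx_poly.
by rewrite size_filter (leq_trans (count_size _ _)).
Qed.

End EvenSizeTraceless.

(* Nonzero trace c: pairs {i-1, i} with 0 < i = n (mod 2), k = c^2, and
   e_n |-> c e_n + pair_tail. *)
Section NonzeroTrace.
Variables (F : fieldType) (n : nat) (beta : 'rV[F]_n.+1).
Hypothesis n_ge3 : (3 <= n)%N.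
Local Notation "''e_' i" := (delta_mx 0 i : 'rV[F]_n.+1) : ring_scope.
Local Notation c := (beta 0 ord_max).
Local Notation tail := (pair_tail n.+1 beta).
Local Notation D := (pairmx n.+1 (c ^+ 2) (tail + c *: 'e_ord_max)).

Lemma trace_upper_max : upper n.+1 (@ord_max n).
Proof. by rewrite /upper; ord_lia. Qed.

Lemma trace_tail_pairmx : tail *m D = - c *: tail.
Proof.
rewrite /pair_tail mulmx_suml scaler_sumr; apply: eq_bigr => j /andP[uj j_max].
rewrite -scalemxAl pair_vec_pairmx // [RHS]scalerA mulrC -[RHS]scalerA; congr (_ *: _).
by rewrite scalerBr !scaleNr opprK scalerA -expr2 addrC.
Qed.

Lemma trace_max_sqr : 'e_ord_max *m D *m D = c ^+ 2 *: 'e_ord_max.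
Proof.
rewrite row_pairmx_max mulmxDl trace_tail_pairmx -scalemxAl row_pairmx_max.
by rewrite scalerDr scalerA -expr2 scaleNr addKr.
Qed.

Lemma trace_row_Q_upper i : upper n.+1 i -> 'e_i *m (D *m D - (c ^+ 2)%:M) = 0.
Proof.
move=> ui; rewrite mulmx_sqr_sub_scalar.
by have [->|i_max] := eqVneq i ord_max; rewrite ?trace_max_sqr ?pairmx_sqr_upper ?subrr.
Qed.

Lemma trace_pairmx_poly : D *m (D *m D - (c ^+ 2)%:M) = 0.
Proof.
have DQ : D *m (D *m D - (c ^+ 2)%:M) = (D *m D - (c ^+ 2)%:M) *m D.
  by rewrite mulmxBr mulmxBl scalar_mxC !mulmxA.
apply/row_matrixP => i; rewrite row0 rowE.
have [ui|li] := boolP (upper n.+1 i).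
  by rewrite DQ mulmxA trace_row_Q_upper ?mul0mx.
have i_max : i != ord_max by apply: contraNneq li => ->; exact: trace_upper_max.
rewrite mulmxA row_pairmx_lower //.
have [usi|lsi] := boolP (upper n.+1 (ord_succ i)); first exact: trace_row_Q_upper.
have i0 : i = 0 :> nat by move: li lsi; rewrite /upper; ord_lia.
have si_max : ord_succ i != ord_max by ord_lia.
rewrite mulmx_sqr_sub_scalar pairmx_sqr_lower ?subrr //.
all: by move: lsi; rewrite /upper; ord_lia.
Qed.

Lemma trace_defect_sqr : (companion beta - D) *m (companion beta - D) = 0.
Proof.
apply: defect_sqr; first by left; exact: trace_upper_max.
by rewrite opprD addrA mulmxBl defect_beta_tail -scalemxAl row_defect_max subrr.
Qed.

Lemma trace_pairmx_eigenvalues : c != 0 -> all (eigenvalue D) [:: 0; c; -c].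
Proof.
move=> c0; have [lpm pm_max spm] := upper_prev trace_upper_max.
pose i : 'I_n.+1 := ord_prev (ord_prev ord_max).
have ui : upper n.+1 i by rewrite /upper; ord_lia.
have i_max : i != ord_max by ord_lia.
have [lpi pi_max spi] := upper_prev ui.
have pi_i : (i == ord_prev i) = false by apply/negbTE; ord_lia.
rewrite /= andbT; apply/and3P; split; apply/eigenvalueP.
- exists (tail + c *: 'e_ord_max - c ^+ 2 *: 'e_(ord_prev ord_max)).
    rewrite !mulmxBl mulmxDl -!scalemxAl trace_tail_pairmx row_pairmx_max.
    rewrite row_pairmx_lower // spm scalerDr scalerA -expr2 scaleNr addKr.
    by rewrite subrr scale0r.
  apply/negP => /eqP/rowP/(_ ord_max).
  rewrite !mxE pair_tail_entry_max !eqxx eq_sym (negPf pm_max) mulr0 subr0 add0r mulr1.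
  by move/eqP; rewrite (negPf c0).
- exists ('e_i + c *: 'e_(ord_prev i)).
    rewrite mulmxDl -scalemxAl row_pairmx_upper // row_pairmx_lower // spi.
    by rewrite scalerDr scalerA -expr2 addrC.
  apply/negP => /eqP/rowP/(_ i); rewrite !mxE !eqxx pi_i mulr0 addr0.
  by move/eqP; rewrite oner_eq0.
- exists ('e_i - c *: 'e_(ord_prev i)).
    by rewrite pair_vec_pairmx // scalerBr !scaleNr opprK scalerA -expr2 addrC.
  apply/negP => /eqP/rowP/(_ i); rewrite !mxE !eqxx pi_i mulr0 subr0.
  by move/eqP; rewrite oner_eq0.
Qed.

Lemma companion_sqzero_trace : (2%:R : F) != 0 -> c != 0 ->
  sqzero_diagonalizable (companion beta) [:: 0; c; -c].
Proof.
move=> two_neq0 c0; rewrite -(all_filterP (trace_pairmx_eigenvalues c0)).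
apply: (sqzero_diagonalizable_split (N := companion beta - D)).
- by rewrite subrKC.
- exact: trace_defect_sqr.
- exact: uniq_0_opp.
- by rewrite horner_mx_X_sqr_sub trace_pairmx_poly.
Qed.

End NonzeroTrace.

Lemma odd_char_two_neq0 (F : fieldType) : odd_char F -> (2%:R : F) != 0.
Proof.
case=> p [p_char p_odd]; apply/negP => /eqP two0.
have p_dvd2 : (p %| 2)%N by rewrite (dvdn_pcharf p_char) two0.
have := dvdn_leq (ltn0Sn 1) p_dvd2; have := prime_gt1 (pcharf_prime p_char).
by move: p_odd; lia.
Qed.

Lemma finField_odd_char (K : finFieldType) : odd #|K| -> (1 < #|K|)%N -> odd_char K.
Proof.
move=> K_odd K_gt1; have [p p_prime p_char] := finPcharP K.
exists p; split=> //; move: K_odd K_gt1; rewrite (card_pprimeChar p_char) oddX.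
by case: (logn _ _) => [|k] //=; rewrite expn0.
Qed.

Lemma finField_outside_0_1_opp (K : finFieldType) : (3 < #|K|)%N ->
  exists x : K, [/\ x != 0, x != 1 & x != -1].
Proof.
move=> K_gt3; pose s : seq K := [:: 0; 1; -1].
case: (pickP [predC s]) => [x|s_full]; first by rewrite !inE !negb_or => /and3P[]; exists x.
have K_s : (#|K| <= #|s|)%N.
  by apply/subset_leq_card/subsetP => x _; move: (s_full x); rewrite inE => /negbFE.
by have := leq_trans K_s (card_size s); rewrite leqNgt K_gt3.
Qed.

Lemma mem_seq3 (T : eqType) (a x y z : T) :
  a \in [:: x; y; z] <-> a = x \/ a = y \/ a = z.
Proof. by rewrite !inE; split=> [/or3P[]/eqP|[|[]]->]; rewrite ?eqxx ?orbT; auto. Qed.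

Section Nonderogatory.
Variables (F : fieldType) (n : nat) (A : 'M[F]_n.+1).
Hypotheses (two_neq0 : (2%:R : F) != 0) (n_ge3 : (3 <= n)%N)
  (A_nd : mxminpoly A = char_poly A).

Lemma nonderogatory_sqzero_trace :
  \tr A != 0 -> sqzero_diagonalizable A [:: 0; \tr A; - \tr A].
Proof.
have [P [beta [Pu PA <-]]] := nonderogatory_companion A_nd.
by move=> c0; apply: sqzero_diagonalizable_similar Pu PA _; apply: companion_sqzero_trace.
Qed.

Lemma nonderogatory_sqzero_odd :
  \tr A = 0 -> ~~ odd n -> sqzero_diagonalizable A [:: 0; 1; -1].
Proof.
have [P [beta [Pu PA <-]]] := nonderogatory_companion A_nd.
move=> c0 n_even; apply: sqzero_diagonalizable_similar Pu PA _.
by apply: companion_sqzero_odd => //; apply: ltnW.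
Qed.

Lemma nonderogatory_sqzero_even (x : F) : \tr A = 0 -> odd n ->
  [/\ x != 0, x != 1 & x != -1] ->
  exists2 s : seq F, (size s <= 4)%N & sqzero_diagonalizable A s.
Proof.
have [P [beta [Pu PA <-]]] := nonderogatory_companion A_nd.
move=> c0 n_odd x_neq; have [s s4 Bs] := companion_sqzero_even n_odd two_neq0 c0 x_neq.
by exists s => //; apply: sqzero_diagonalizable_similar Pu PA _.
Qed.

End Nonderogatory.

Theorem proposition2p1 :
  (forall (F : fieldType) (n : nat) (A : 'M[F]_n),
      odd_char F -> (5 <= n)%N -> nonderogatory A ->
      let c := \tr A in
      (c != 0 ->
         exists M : 'M[F]_n, M *m M = 0 /\ diagonalizable (A + M) /\
           (forall a : F, eigenvalue (A + M) a <-> (a = 0 \/ a = c \/ a = - c)))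
      /\
      (c = 0 -> odd n ->
         exists M : 'M[F]_n, M *m M = 0 /\ diagonalizable (A + M) /\
           (forall a : F, eigenvalue (A + M) a <-> (a = 0 \/ a = 1 \/ a = - 1)))
      /\
      (* F is not F_3, i.e. F has an element outside {0, 1, -1} *)
      (c = 0 -> ~~ odd n -> (exists x : F, [/\ x != 0, x != 1 & x != - 1]) ->
         exists M : 'M[F]_n, M *m M = 0 /\ diagonalizable (A + M) /\
           exists s : seq F, (size s <= 4)%N /\
             (forall a : F, eigenvalue (A + M) a -> a \in s)))
  /\
  (forall (K : finFieldType) (n : nat) (A : 'M[K]_n),
      odd #|K| -> (5 <= #|K|)%N -> (5 <= n)%N -> nonderogatory A ->
      exists D M : 'M[K]_n, diagonalizable D /\ M *m M = 0 /\ A = D + M).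
Proof.
split=> [F [//|n] A /odd_char_two_neq0 two_neq0 n_ge5 A_nd c|K n A K_odd K_ge5 n_ge5 A_nd].
  have n_ge3 : (3 <= n)%N by move: n_ge5; lia.
  split; [|split].
  - move=> c_neq0; have [M [MM AM_diag AM_eig]] :=
      nonderogatory_sqzero_trace two_neq0 n_ge3 A_nd c_neq0.
    by exists M; do 2!split=> //; move=> a; rewrite AM_eig; apply: mem_seq3.
  - move=> c0 n_even; have [M [MM AM_diag AM_eig]] :=
      nonderogatory_sqzero_odd two_neq0 n_ge3 A_nd c0 n_even.
    by exists M; do 2!split=> //; move=> a; rewrite AM_eig; apply: mem_seq3.
  - move=> c0 /negbNE n_odd [x x_neq]; have [s s_le4 [M [MM AM_diag AM_eig]]] :=
      nonderogatory_sqzero_even two_neq0 A_nd c0 n_odd x_neq.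
    by exists M; do 2!split=> //; exists s; split=> // a; rewrite AM_eig.
case: n A n_ge5 A_nd => [//|n] A n_ge5 A_nd; have n_ge3 : (3 <= n)%N by move: n_ge5; lia.
have two_neq0 := odd_char_two_neq0 (finField_odd_char K_odd (ltnW (ltnW (ltnW K_ge5)))).
suff [s [M [MM AM_diag _]]] : exists s, sqzero_diagonalizable A s.
  by exists (A + M), (- M); rewrite mulNmx mulmxN opprK MM addrK.
have [c0|c_neq0] := eqVneq (\tr A) 0; last first.
  by exists [:: 0; \tr A; - \tr A]; apply: nonderogatory_sqzero_trace.
have [n_odd|n_even] := boolP (odd n); last first.
  by exists [:: 0; 1; -1]; apply: nonderogatory_sqzero_odd.
have [x x_neq] := finField_outside_0_1_opp (ltnW K_ge5).
by have [s _ As] := nonderogatory_sqzero_even two_neq0 A_nd c0 n_odd x_neq; exists s.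
Qed.
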